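(* Let $h, j_2\in\mathbb{R}$ with $j_2\neq 0$, and suppose the cubic $P(z)=-2z^3+2z^2+2hz-\frac{j_2^2}{2}$ has three distinct real roots $z_1<z_2<z_3$ (then $z_1<0<z_2<z_3$). Define $$I_1(h,j_2)=\frac{\sqrt2}{2\pi}\int_{z_2}^{z_3}\frac{\sqrt{P(z)}}{z}\,dz .$$ Then $$2\pi I_1(h,j_2)=g_1K(\kappa)+g_2E(\kappa)+g_3\Pi(n,\kappa),$$ where $$g_1=\frac{4(2h+z_1)}{3\sqrt{z_3-z_1}},\quad g_2=\frac{4\sqrt{z_3-z_1}}{3},\quad g_3=-\frac{j_2^2}{z_3\sqrt{z_3-z_1}},\qquad \kappa^2=\frac{z_3-z_2}{z_3-z_1},\quad n=\frac{z_3-z_2}{z_3}.$$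
   Context: Setting: the champagne bottle Hamiltonian $H=\frac12(y_1^2+y_2^2)-(x_1^2+x_2^2)+(x_1^2+x_2^2)^2$ in polar coordinates reads $H=\frac12(p_r^2+p_\varphi^2/r^2)+r^4-r^2$, with angular momentum $p_\varphi$. For energy $h$ and angular momentum value $\ell$, the quantities above are the rescaled ones: $j_2=\sqrt2\,\ell$ and $I_1=\sqrt2\cdot\frac{1}{2\pi}\oint p_r\,dr$ (the radial action, computed with $z=r^2$), which equals $\frac{\sqrt2}{4\pi}\oint_\beta \frac{w}{z}dz$ over the real oval $\beta$ of $w^2=P(z)$ encircling $[z_2,z_3]$. $K(\kappa)=\int_0^{\pi/2}\frac{dt}{\sqrt{1-\kappa^2\sin^2t}}$, $E(\kappa)=\int_0^{\pi/2}\sqrt{1-\kappa^2\sin^2 t}\,dt$, $\Pi(n,\kappa)=\int_0^{\pi/2}\frac{dt}{(1-n\sin^2t)\sqrt{1-\kappa^2\sin^2t}}$ are the complete elliptic integrals of the first, second and third kind in Legendre form. *)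

From Stdlib Require Import Reals.
From Coquelicot Require Import Coquelicot.
Open Scope R_scope.

Definition Pcub (h j2 z : R) : R :=
  -2 * z ^ 3 + 2 * z ^ 2 + 2 * h * z - j2 ^ 2 / 2.

Definition ellK (kappa : R) : R :=
  RInt (fun t => / sqrt (1 - kappa ^ 2 * sin t ^ 2)) 0 (PI / 2).

Definition ellE (kappa : R) : R :=
  RInt (fun t => sqrt (1 - kappa ^ 2 * sin t ^ 2)) 0 (PI / 2).

Definition ellPi (n kappa : R) : R :=
  RInt (fun t => / ((1 - n * sin t ^ 2) * sqrt (1 - kappa ^ 2 * sin t ^ 2)))
       0 (PI / 2).

(* Rescaled radial action I_1(h, j2), given the two largest roots z2 < z3. *)
Definition I1 (h j2 z2 z3 : R) : R :=
  sqrt 2 / (2 * PI) * RInt (fun z => sqrt (Pcub h j2 z) / z) z2 z3.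

(* The substitution z = z3 - (z3 - z2) sin^2 t maps [0, pi/2] onto [z2, z3] and
   factorizes the cubic: P(z) = 2 (z3 - z1) ((z3 - z2) sin t cos t)^2 (1 - kappa^2 sin^2 t).
   The form sqrt 2 * sqrt (P z) / z dz thus becomes
   4 (z3 - z2)^2 u (1 - u) r Delta / (z3 (1 - n u)) dt, with u = sin^2 t,
   r = sqrt (z3 - z1) and Delta = sqrt (1 - kappa^2 u).  A partial fraction decomposition
   in u rewrites it as g1 / Delta + g2 Delta + g3 / ((1 - n u) Delta) plus a multiple of
   the derivative of sin t cos t Delta, which vanishes at both ends. *)

From Stdlib Require Import Reals Lra.
From Coquelicot Require Import Coquelicot.
Open Scope R_scope.

Lemma Pcub_common_root_quadratic (h j2 a b : R) :
  a <> b -> Pcub h j2 a = 0 -> Pcub h j2 b = 0 ->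
  h + (a + b) - (a * a + a * b + b * b) = 0.
Proof.
  intros Hab Pa Pb.
  assert (E : (a - b) * (h + (a + b) - (a * a + a * b + b * b)) = 0).
  { replace 0 with ((Pcub h j2 a - Pcub h j2 b) / 2) by (rewrite Pa, Pb; field).
    unfold Pcub; field. }
  destruct (Rmult_integral _ _ E); [lra | assumption].
Qed.

Lemma Pcub_vieta (h j2 z1 z2 z3 : R) :
  z1 < z2 -> z2 < z3 ->
  Pcub h j2 z1 = 0 -> Pcub h j2 z2 = 0 -> Pcub h j2 z3 = 0 ->
  z1 + z2 + z3 = 1 /\ h = - (z1 * z2 + z1 * z3 + z2 * z3) /\ j2 ^ 2 = -4 * z1 * z2 * z3.
Proof.
  intros H12 H23 P1 P2 P3.
  pose proof (Pcub_common_root_quadratic h j2 z1 z2 ltac:(lra) P1 P2) as Q12.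
  pose proof (Pcub_common_root_quadratic h j2 z1 z3 ltac:(lra) P1 P3) as Q13.
  assert (Hsum : z1 + z2 + z3 = 1).
  { assert (E : (z2 - z3) * (1 - (z1 + z2 + z3)) = 0) by lra.
    destruct (Rmult_integral _ _ E); lra. }
  assert (Hh : h = - (z1 * z2 + z1 * z3 + z2 * z3)).
  { replace z3 with (1 - z1 - z2) by lra; lra. }
  repeat split; try assumption.
  unfold Pcub in P1. replace z3 with (1 - z1 - z2) in * by lra. subst h. lra.
Qed.

Lemma Pcub_factor (h j2 z1 z2 z3 z : R) :
  z1 + z2 + z3 = 1 -> h = - (z1 * z2 + z1 * z3 + z2 * z3) -> j2 ^ 2 = -4 * z1 * z2 * z3 ->
  Pcub h j2 z = -2 * (z - z1) * (z - z2) * (z - z3).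
Proof.
  intros Hsum Hh Hj. unfold Pcub. rewrite Hj, Hh.
  replace z1 with (1 - z2 - z3) by lra. field.
Qed.

Lemma Pcub_middle_root_pos (h j2 z1 z2 z3 : R) :
  j2 <> 0 -> z1 < z2 -> z2 < z3 ->
  z1 + z2 + z3 = 1 -> j2 ^ 2 = -4 * z1 * z2 * z3 -> 0 < z2.
Proof.
  intros Hj H12 H23 Hsum Hprod.
  assert (Hpos : 0 < j2 ^ 2) by (apply pow2_gt_0; assumption).
  destruct (Rlt_or_le 0 z2) as [|Hz]; [assumption|].
  assert (0 <= z1 * z2) by nra. nra.
Qed.

Definition legendre_delta (kappa t : R) : R := sqrt (1 - kappa ^ 2 * sin t ^ 2).

Lemma one_sub_mul_sin2_pos (a t : R) : a < 1 -> 0 < 1 - a * sin t ^ 2.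
Proof.
  intro Ha. pose proof (SIN_bound t).
  assert (0 <= sin t ^ 2 <= 1) by (split; nra).
  destruct (Rle_or_lt 0 a); nra.
Qed.

Lemma legendre_delta_pos (kappa t : R) : kappa ^ 2 < 1 -> 0 < legendre_delta kappa t.
Proof. intro Hk. apply sqrt_lt_R0, one_sub_mul_sin2_pos, Hk. Qed.

Lemma legendre_delta_sqr (kappa t : R) :
  kappa ^ 2 < 1 -> legendre_delta kappa t * legendre_delta kappa t = 1 - kappa ^ 2 * sin t ^ 2.
Proof. intro Hk. apply sqrt_sqrt, Rlt_le, one_sub_mul_sin2_pos, Hk. Qed.

Lemma is_derive_legendre_delta (kappa t : R) : kappa ^ 2 < 1 ->
  is_derive (legendre_delta kappa) t
    (- (kappa ^ 2 * sin t * cos t) / legendre_delta kappa t).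
Proof.
  intro Hk. pose proof (one_sub_mul_sin2_pos _ t Hk).
  unfold legendre_delta. auto_derive.
  - replace (1 + _) with (1 - kappa ^ 2 * sin t ^ 2) by ring. lra.
  - replace (sqrt (1 + _)) with (sqrt (1 - kappa ^ 2 * sin t ^ 2)) by (f_equal; ring).
    field. apply Rgt_not_eq, sqrt_lt_R0. assumption.
Qed.

Lemma continuous_legendre_delta (kappa t : R) :
  kappa ^ 2 < 1 -> continuous (legendre_delta kappa) t.
Proof.
  intro Hk. apply (ex_derive_continuous (K := R_AbsRing) (V := R_NormedModule)).
  eexists. apply is_derive_legendre_delta, Hk.
Qed.

Lemma is_RInt_ellK (kappa : R) : kappa ^ 2 < 1 ->
  is_RInt (fun t => / legendre_delta kappa t) 0 (PI / 2) (ellK kappa).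
Proof.
  intro Hk. apply (RInt_correct (V := R_CompleteNormedModule)).
  apply ex_RInt_continuous; intros t _.
  apply continuous_Rinv_comp.
  - apply continuous_legendre_delta, Hk.
  - apply Rgt_not_eq, legendre_delta_pos, Hk.
Qed.

Lemma is_RInt_ellE (kappa : R) : kappa ^ 2 < 1 ->
  is_RInt (legendre_delta kappa) 0 (PI / 2) (ellE kappa).
Proof.
  intro Hk. apply (RInt_correct (V := R_CompleteNormedModule)).
  apply ex_RInt_continuous; intros t _. apply continuous_legendre_delta, Hk.
Qed.

Lemma is_RInt_ellPi (n kappa : R) : n < 1 -> kappa ^ 2 < 1 ->
  is_RInt (fun t => / ((1 - n * sin t ^ 2) * legendre_delta kappa t)) 0 (PI / 2)
    (ellPi n kappa).
Proof.
  intros Hn Hk. apply (RInt_correct (V := R_CompleteNormedModule)).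
  apply ex_RInt_continuous; intros t _.
  apply continuous_Rinv_comp.
  - apply (continuous_mult (fun t => 1 - n * sin t ^ 2)).
    + apply (ex_derive_continuous (K := R_AbsRing) (V := R_NormedModule)).
      auto_derive. exact I.
    + apply continuous_legendre_delta, Hk.
  - apply Rgt_not_eq, Rmult_lt_0_compat.
    + apply one_sub_mul_sin2_pos, Hn.
    + apply legendre_delta_pos, Hk.
Qed.

Lemma is_derive_sin_cos_legendre_delta (kappa t : R) : kappa ^ 2 < 1 ->
  is_derive (fun t => sin t * cos t * legendre_delta kappa t) t
    ((cos t ^ 2 - sin t ^ 2) * legendre_delta kappa t
     - kappa ^ 2 * sin t ^ 2 * cos t ^ 2 / legendre_delta kappa t).
Proof.
  intro Hk. pose proof (is_derive_legendre_delta kappa t Hk) as HD.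
  pose proof (legendre_delta_pos kappa t Hk).
  auto_derive.
  - eexists; exact HD.
  - replace (Derive _ t) with (- (kappa ^ 2 * sin t * cos t) / legendre_delta kappa t)
      by (symmetry; apply is_derive_unique, HD).
    field. lra.
Qed.

Lemma is_RInt_derive_sin_cos_legendre_delta (kappa : R) : kappa ^ 2 < 1 ->
  is_RInt (fun t => (cos t ^ 2 - sin t ^ 2) * legendre_delta kappa t
                    - kappa ^ 2 * sin t ^ 2 * cos t ^ 2 / legendre_delta kappa t)
    0 (PI / 2) 0.
Proof.
  intro Hk.
  set (F := fun t => sin t * cos t * legendre_delta kappa t).
  assert (HF : minus (F (PI / 2)) (F 0) = 0).
  { unfold F, minus, plus, opp; simpl. rewrite cos_PI2, sin_0. ring. }
  rewrite <- HF at 2.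
  apply (is_RInt_derive (V := R_CompleteNormedModule)); intros t _.
  - apply is_derive_sin_cos_legendre_delta, Hk.
  - pose proof (legendre_delta_pos kappa t Hk).
    apply (continuous_minus (K := R_AbsRing) (V := R_NormedModule)).
    + apply (continuous_mult (fun t => cos t ^ 2 - sin t ^ 2)).
      * apply (ex_derive_continuous (K := R_AbsRing) (V := R_NormedModule)).
        auto_derive. exact I.
      * apply continuous_legendre_delta, Hk.
    + apply (continuous_mult (fun t => kappa ^ 2 * sin t ^ 2 * cos t ^ 2)).
      * apply (ex_derive_continuous (K := R_AbsRing) (V := R_NormedModule)).
        auto_derive. exact I.
      * apply continuous_Rinv_comp; [apply continuous_legendre_delta, Hk | lra].
Qed.

Lemma is_RInt_sin2_substitution (f : R -> R) (a b : R) :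
  a <= b -> (forall z, a <= z <= b -> continuous f z) ->
  is_RInt (fun t => 2 * (b - a) * sin t * cos t * f (b - (b - a) * sin t ^ 2))
    0 (PI / 2) (RInt f a b).
Proof.
  intros Hab Hf.
  set (g := fun t => b - (b - a) * sin t ^ 2).
  set (dg := fun t => - (2 * (b - a) * sin t * cos t)).
  assert (Hg : forall t, a <= g t <= b).
  { intro t. pose proof (SIN_bound t). unfold g.
    assert (0 <= sin t ^ 2 <= 1) by (split; nra). split; nra. }
  assert (Hdg : forall t, is_derive g t (dg t) /\ continuous dg t).
  { intro t. split.
    - unfold g, dg. auto_derive; [exact I | ring].
    - apply (ex_derive_continuous (K := R_AbsRing) (V := R_NormedModule)).
      unfold dg. auto_derive. exact I. }
  pose proof (is_RInt_comp (V := R_CompleteNormedModule) f g dg 0 (PI / 2)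
    (fun t _ => Hf (g t) (Hg t)) (fun t _ => Hdg t)) as Hcomp.
  replace (g 0) with b in Hcomp by (unfold g; rewrite sin_0; ring).
  replace (g (PI / 2)) with a in Hcomp by (unfold g; rewrite sin_PI2; ring).
  apply is_RInt_opp in Hcomp.
  rewrite (opp_RInt_swap (V := R_CompleteNormedModule)) in Hcomp.
  - apply (is_RInt_ext _ _ _ _ _ ) with (2 := Hcomp). intros t _.
    unfold dg, g, opp, scal, mult; simpl. unfold mult; simpl. ring.
  - apply ex_RInt_continuous. intros z Hz. apply Hf.
    rewrite Rmin_right, Rmax_left in Hz; lra.
Qed.

Lemma continuous_sqrt_Pcub_div (h j2 z : R) :
  z <> 0 -> continuous (fun z => sqrt (Pcub h j2 z) / z) z.
Proof.
  intro Hz. apply (continuous_mult (fun z => sqrt (Pcub h j2 z)) Rinv).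
  - apply (continuous_comp (Pcub h j2) sqrt), continuous_sqrt.
    apply (ex_derive_continuous (K := R_AbsRing) (V := R_NormedModule)).
    unfold Pcub. auto_derive. exact I.
  - apply continuous_Rinv, Hz.
Qed.

Section RadialIntegrand.

Variables h j2 z1 z2 z3 : R.
Hypothesis Hsum : z1 + z2 + z3 = 1.
Hypothesis Hh : h = - (z1 * z2 + z1 * z3 + z2 * z3).
Hypothesis Hj2 : j2 ^ 2 = -4 * z1 * z2 * z3.
Hypothesis Hz2 : 0 < z2.
Hypothesis H12 : z1 < z2.
Hypothesis H23 : z2 < z3.

Lemma modulus_sqr_lt_1 : (z3 - z2) / (z3 - z1) < 1.
Proof. apply Rmult_lt_reg_r with (z3 - z1); [lra|]. field_simplify; lra. Qed.

Lemma characteristic_lt_1 : (z3 - z2) / z3 < 1.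
Proof. apply Rmult_lt_reg_r with z3; [lra|]. field_simplify; lra. Qed.

Lemma radial_integrand_partial_fractions (u D r : R) :
  r * r = z3 - z1 -> r <> 0 -> z3 <> 0 -> z3 - (z3 - z2) * u <> 0 ->
  D * D = 1 - (z3 - z2) / (z3 - z1) * u -> D <> 0 ->
  4 * (z3 - z2) ^ 2 * u * (1 - u) * r * D / (z3 - (z3 - z2) * u)
  = 4 * (2 * h + z1) / (3 * r) * / D + 4 * r / 3 * D
    + - (j2 ^ 2 / (z3 * r)) * / ((1 - (z3 - z2) / z3 * u) * D)
    - 4 * (z3 - z2) * r / 3
      * ((1 - 2 * u) * D - (z3 - z2) / (z3 - z1) * u * (1 - u) / D).
Proof.
  intros Hr Hr0 Hz3 Hz HD HD0.
  assert (Hn : 1 - (z3 - z2) / z3 * u <> 0).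
  { replace (1 - (z3 - z2) / z3 * u) with ((z3 - (z3 - z2) * u) / z3) by (field; assumption).
    unfold Rdiv; apply Rmult_integral_contrapositive; split; [|apply Rinv_neq_0_compat]; assumption. }
  assert (HL : z3 - z1 <> 0)
    by (rewrite <- Hr; apply Rmult_integral_contrapositive; split; assumption).
  transitivity (4 * (z3 - z2) ^ 2 * u * (1 - u) * r * (D * D) / (z3 - (z3 - z2) * u) / D).
  { field. repeat split; assumption. }
  symmetry.
  transitivity ((4 * (2 * h + z1) / (3 * r) + 4 * r / 3 * (D * D)
    + - (j2 ^ 2 / (z3 * r)) / (1 - (z3 - z2) / z3 * u)
    - 4 * (z3 - z2) * r / 3
      * ((1 - 2 * u) * (D * D) - (z3 - z2) / (z3 - z1) * u * (1 - u))) / D).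
  { field. repeat split; assumption. }
  symmetry. f_equal.
  rewrite HD, Hj2, Hh.
  replace z2 with (1 - z1 - z3) in * by lra.
  replace z1 with (z3 - r * r) in * by lra.
  field. repeat split; assumption.
Qed.

Lemma Pcub_sin2 (s c : R) : s ^ 2 + c ^ 2 = 1 ->
  Pcub h j2 (z3 - (z3 - z2) * s ^ 2)
  = 2 * (z3 - z1) * ((z3 - z2) * s * c) ^ 2 * (1 - (z3 - z2) / (z3 - z1) * s ^ 2).
Proof.
  intro Hsc. rewrite (Pcub_factor h j2 z1 z2 z3) by assumption.
  replace (((z3 - z2) * s * c) ^ 2) with ((z3 - z2) ^ 2 * s ^ 2 * c ^ 2) by ring.
  replace (c ^ 2) with (1 - s ^ 2) by lra.
  field. lra.
Qed.

Variable kappa : R.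
Hypothesis Hk : kappa ^ 2 = (z3 - z2) / (z3 - z1).

Let Hk1 : kappa ^ 2 < 1.
Proof. rewrite Hk. exact modulus_sqr_lt_1. Qed.

Lemma sqrt_Pcub_sin2 (t : R) : 0 <= sin t -> 0 <= cos t ->
  sqrt (Pcub h j2 (z3 - (z3 - z2) * sin t ^ 2))
  = sqrt 2 * sqrt (z3 - z1) * ((z3 - z2) * sin t * cos t) * legendre_delta kappa t.
Proof.
  intros Hs Hc.
  assert (HY := one_sub_mul_sin2_pos _ t Hk1).
  assert (HX : 0 <= (z3 - z2) * sin t * cos t) by (repeat apply Rmult_le_pos; lra).
  rewrite (Pcub_sin2 (sin t) (cos t)) by (pose proof (sin2_cos2 t); unfold Rsqr in *; lra).
  unfold legendre_delta. rewrite <- Hk.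
  rewrite !sqrt_mult by (repeat apply Rmult_le_pos; try apply pow2_ge_0; lra).
  rewrite sqrt_pow2 by exact HX.
  reflexivity.
Qed.

Lemma radial_integrand_legendre_form (t : R) : 0 <= t <= PI / 2 ->
  sqrt 2 * (2 * (z3 - z2) * sin t * cos t
            * (sqrt (Pcub h j2 (z3 - (z3 - z2) * sin t ^ 2)) / (z3 - (z3 - z2) * sin t ^ 2)))
  = 4 * (2 * h + z1) / (3 * sqrt (z3 - z1)) * / legendre_delta kappa t
    + 4 * sqrt (z3 - z1) / 3 * legendre_delta kappa t
    + - (j2 ^ 2 / (z3 * sqrt (z3 - z1)))
      * / ((1 - (z3 - z2) / z3 * sin t ^ 2) * legendre_delta kappa t)
    - 4 * (z3 - z2) * sqrt (z3 - z1) / 3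
      * ((cos t ^ 2 - sin t ^ 2) * legendre_delta kappa t
         - kappa ^ 2 * sin t ^ 2 * cos t ^ 2 / legendre_delta kappa t).
Proof.
  intro Ht.
  assert (Hs : 0 <= sin t) by (apply sin_ge_0; lra).
  assert (Hc : 0 <= cos t) by (apply cos_ge_0; lra).
  assert (Hcos2 : cos t ^ 2 = 1 - sin t ^ 2)
    by (pose proof (sin2_cos2 t); unfold Rsqr in *; lra).
  assert (Hz : 0 < z3 - (z3 - z2) * sin t ^ 2).
  { pose proof (SIN_bound t). assert (sin t ^ 2 <= 1) by nra. nra. }
  set (D := legendre_delta kappa t).
  set (r := sqrt (z3 - z1)).
  assert (Hr : r * r = z3 - z1) by (apply sqrt_sqrt; lra).
  assert (Hr0 : 0 < r) by (apply sqrt_lt_R0; lra).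
  assert (HD : D * D = 1 - (z3 - z2) / (z3 - z1) * sin t ^ 2)
    by (rewrite <- Hk; apply legendre_delta_sqr, Hk1).
  assert (HD0 : 0 < D) by (apply legendre_delta_pos, Hk1).
  rewrite (sqrt_Pcub_sin2 t Hs Hc). fold r D.
  transitivity (4 * (z3 - z2) ^ 2 * sin t ^ 2 * (1 - sin t ^ 2) * r * D
                / (z3 - (z3 - z2) * sin t ^ 2)).
  { rewrite <- Hcos2. replace 4 with (2 * (sqrt 2 * sqrt 2)) by (rewrite sqrt_sqrt; lra).
    field. lra. }
  rewrite (radial_integrand_partial_fractions (sin t ^ 2) D r) by lra.
  rewrite Hcos2, Hk. ring.
Qed.

Lemma is_RInt_radial_integrand_legendre :
  is_RInt (fun t => sqrt 2 * (2 * (z3 - z2) * sin t * cos t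
            * (sqrt (Pcub h j2 (z3 - (z3 - z2) * sin t ^ 2)) / (z3 - (z3 - z2) * sin t ^ 2))))
    0 (PI / 2)
    (4 * (2 * h + z1) / (3 * sqrt (z3 - z1)) * ellK kappa
     + 4 * sqrt (z3 - z1) / 3 * ellE kappa
     + - (j2 ^ 2 / (z3 * sqrt (z3 - z1))) * ellPi ((z3 - z2) / z3) kappa
     - 4 * (z3 - z2) * sqrt (z3 - z1) / 3 * 0).
Proof.
  apply (is_RInt_ext (V := R_NormedModule)) with (2 :=
    is_RInt_minus _ _ _ _ _ _
      (is_RInt_plus _ _ _ _ _ _
        (is_RInt_plus _ _ _ _ _ _
          (is_RInt_scal _ _ _ _ _ (is_RInt_ellK kappa Hk1))
          (is_RInt_scal _ _ _ _ _ (is_RInt_ellE kappa Hk1)))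
        (is_RInt_scal _ _ _ _ _ (is_RInt_ellPi _ kappa characteristic_lt_1 Hk1)))
      (is_RInt_scal _ _ _ _ _ (is_RInt_derive_sin_cos_legendre_delta kappa Hk1))).
  intros t Ht. pose proof PI_RGT_0.
  rewrite Rmin_left, Rmax_right in Ht by lra.
  symmetry. apply radial_integrand_legendre_form. lra.
Qed.

End RadialIntegrand.

Theorem lemma1 (h j2 z1 z2 z3 : R) :
  j2 <> 0 ->
  z1 < z2 -> z2 < z3 ->
  Pcub h j2 z1 = 0 -> Pcub h j2 z2 = 0 -> Pcub h j2 z3 = 0 ->
  let g1 := 4 * (2 * h + z1) / (3 * sqrt (z3 - z1)) in
  let g2 := 4 * sqrt (z3 - z1) / 3 in
  let g3 := - (j2 ^ 2 / (z3 * sqrt (z3 - z1))) in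
  let kappa := sqrt ((z3 - z2) / (z3 - z1)) in
  let n := (z3 - z2) / z3 in
  2 * PI * I1 h j2 z2 z3
  = g1 * ellK kappa + g2 * ellE kappa + g3 * ellPi n kappa.
Proof.
  intros Hj H12 H23 P1 P2 P3 g1 g2 g3 kappa n.
  destruct (Pcub_vieta h j2 z1 z2 z3 H12 H23 P1 P2 P3) as (Hsum & Hh & Hj2).
  pose proof (Pcub_middle_root_pos h j2 z1 z2 z3 Hj H12 H23 Hsum Hj2) as Hz2.
  assert (Hk : kappa ^ 2 = (z3 - z2) / (z3 - z1))
    by (apply pow2_sqrt, Rlt_le, Rdiv_lt_0_compat; lra).
  set (f := fun z => sqrt (Pcub h j2 z) / z).
  assert (Hsubst := is_RInt_scal _ _ _ (sqrt 2) _
    (is_RInt_sin2_substitution f z2 z3 (Rlt_le _ _ H23)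
       (fun z Hz => continuous_sqrt_Pcub_div h j2 z ltac:(lra)))).
  assert (Hvalue := eq_trans (eq_sym (is_RInt_unique _ _ _ _ Hsubst))
    (is_RInt_unique _ _ _ _
       (is_RInt_radial_integrand_legendre h j2 z1 z2 z3 Hsum Hh Hj2 Hz2 H12 H23 kappa Hk))).
  change (sqrt 2 * RInt f z2 z3 = g1 * ellK kappa + g2 * ellE kappa + g3 * ellPi n kappa
          - 4 * (z3 - z2) * sqrt (z3 - z1) / 3 * 0) in Hvalue.
  unfold I1. fold f.
  replace (2 * PI * (sqrt 2 / (2 * PI) * RInt f z2 z3)) with (sqrt 2 * RInt f z2 z3)
    by (field; apply PI_neq0).
  rewrite Hvalue. ring.
Qed.
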